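(* Let $p\in[1,\infty)$, $w$ a weight sequence, and let $A\subset L_{p,w}$ be bounded in $\|\cdot\|_{p,w}$ and equinormed with respect to $\{\|\cdot\|_{p,w,i}\}_{i\in\mathbb{N}}$. Then $$\forall d>0\ \exists N\in\mathbb{N}\ \forall a\in A\ \forall n\ge N:\ |a_n|<d.$$
   Context: A weight sequence is a sequence $w=(w_i)$ of positive reals with $w_1=1\ge w_2\ge\dots$, $w_i\to0$, and $\sum_i w_i=+\infty$. For a real sequence $a$, $\|a\|_{p,w}=\sup_{\sigma}\big(\sum_{i=1}^\infty |a_{\sigma_i}|^p w_i\big)^{1/p}$ over all permutations $\sigma$ of $\mathbb{N}$, and $L_{p,w}$ is the set of real sequences with finite $\|\cdot\|_{p,w}$. For $i\in\mathbb{N}$, $\|a\|_{p,w,i}=\|(a_1,\dots,a_i,0,0,\dots)\|_{p,w}$. $A$ is equinormed if $\forall\varepsilon>0\ \exists i\ \forall a\in A:\ \|a\|_{p,w}\le\|a\|_{p,w,i}+\varepsilon$. *)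

(* R : realType. Sequences are 0-indexed (nat -> R). *)
From mathcomp Require Import all_boot all_order all_algebra.
From mathcomp Require Import all_classical all_reals all_analysis.
Set Implicit Arguments. Unset Strict Implicit. Unset Printing Implicit Defensive.
Import Order.TTheory GRing.Theory Num.Theory.
Local Open Scope classical_set_scope.
Local Open Scope ring_scope.

Definition weight_seq {R : realType} (w : nat -> R) : Prop :=
  w 0%N = 1 /\ (forall i, 0 < w i) /\ (forall i, w i.+1 <= w i) /\
  w @ \oo --> 0 /\ (\sum_(0 <= i <oo) (w i)%:E = +oo)%E.

Definition lorentz_norm {R : realType} (p : R) (w : nat -> R) (a : nat -> R)
  : \bar R :=
  ereal_sup [set ((\sum_(0 <= i <oo) ((`|a (s i)| `^ p) * w i)%:E) `^ p^-1)%E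
            | s in [set s : nat -> nat | bijective s]].

(* truncation (a_1,...,a_i,0,0,...) : in 0-indexed form, keep indices < i *)
Definition trunc {R : realType} (i : nat) (a : nat -> R) : nat -> R :=
  fun n => if (n < i)%N then a n else 0.

Definition lorentz_norm_i {R : realType} (p : R) (w : nat -> R) (i : nat)
  (a : nat -> R) : \bar R := lorentz_norm p w (trunc i a).

Definition L_pw {R : realType} (p : R) (w : nat -> R) : set (nat -> R) :=
  [set a | (lorentz_norm p w a < +oo)%E].

Definition norm_bounded {R : realType} (p : R) (w : nat -> R)
  (A : set (nat -> R)) : Prop :=
  exists M : R, forall a, A a -> (lorentz_norm p w a <= M%:E)%E.

Definition equinormed {R : realType} (p : R) (w : nat -> R)
  (A : set (nat -> R)) : Prop :=
  forall eps : R, 0 < eps -> exists i : nat, forall a, A a ->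
    (lorentz_norm p w a <= lorentz_norm_i p w i a + eps%:E)%E.

From mathcomp Require Import all_boot all_order all_algebra.
From mathcomp Require Import all_classical all_reals all_analysis.
From mathcomp Require Import ring lra.
Import Order.TTheory GRing.Theory Num.Theory.
Local Open Scope classical_set_scope.
Local Open Scope ring_scope.

(* Suppose |a n| >= d for some n >= i.  In every rearrangement of the
   truncation [trunc i a], the bound M on the norm forces an entry smaller than
   d/2 among the first m positions, where m depends only on M and d (the
   partial sums of w are unbounded).  Exchanging that slot with the one holding
   the n-th entry, which the truncation kills, and restoring a gives a
   rearrangement of a whose weighted sum is larger by at least
   delta = (d^p - (d/2)^p) w m.  Hence
   ||trunc i a||^p <= ||a||^p - delta, whereas equinormedness gives
   ||a|| <= ||trunc i a|| + eps; by convexity of t |-> t^p on [0, M + 1] the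
   two are incompatible once eps (M + 1)^p < delta. *)

Section powR_facts.
#[local] Set Implicit Arguments.
#[local] Unset Strict Implicit.
Context {R : realType}.
Implicit Types p r t x y : R.

Lemma nneg_ler_powR r x y : 0 <= r -> 0 <= x -> x <= y -> x `^ r <= y `^ r.
Proof.
by move=> r0 x0 xy; apply: ge0_ler_powR; rewrite ?nnegrE // (le_trans x0).
Qed.

Lemma nneg_ltr_powR r x y : 0 < r -> 0 <= x -> x < y -> x `^ r < y `^ r.
Proof.
by move=> r0 x0 xy; apply: gt0_ltr_powR; rewrite ?nnegrE // (le_trans x0) ?ltW.
Qed.

Lemma powRVK p t : 0 < p -> 0 <= t -> (t `^ p^-1) `^ p = t.
Proof. by move=> p0 t0; rewrite -powRrM mulVf ?gt_eqF // powRr1. Qed.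

Lemma powRKV p t : 0 < p -> 0 <= t -> (t `^ p) `^ p^-1 = t.
Proof. by move=> p0 t0; rewrite -powRrM mulfV ?gt_eqF // powRr1. Qed.

Lemma poweRV_le p x (S : \bar R) : 0 < p -> (0 <= S)%E ->
  (S `^ p^-1 <= x%:E)%E -> (S <= (x `^ p)%:E)%E.
Proof.
move=> p0; case: S => [t| |] //; last by rewrite poweRyr ?invr_eq0 ?gt_eqF.
rewrite poweR_EFin !lee_fin => t0 tx.
by rewrite -(powRVK p0 t0) nneg_ler_powR ?powR_ge0 // ltW.
Qed.

(* Convexity of [t `^ p] on the segment from [y] to [K + 1], of length at least 1. *)
Lemma powRDr_le p K y e : 1 <= p -> 0 <= y -> y <= K -> 0 <= e -> e <= 1 ->
  (y + e) `^ p <= y `^ p + e * (K + 1) `^ p.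
Proof.
move=> p1 y0 yK e0 e1.
have gap_ge1 : 1 <= K + 1 - y by lra.
have gap_gt0 : 0 < K + 1 - y by lra.
set l := e / (K + 1 - y).
have l0 : 0 <= l by rewrite divr_ge0 // ltW.
have le : l <= e by rewrite ler_pdivrMr // ler_peMr.
have l1 : l <= 1 by lra.
have K1_ge0 : (K + 1 : R^o) \in (`[0, +oo[%classic : set R).
  by rewrite inE /= in_itv /= andbT; lra.
have y_ge0 : (y : R^o) \in (`[0, +oo[%classic : set R).
  by rewrite inE /= in_itv /= andbT.
have := @convex_powR R p p1 (Itv01 l0 l1) _ _ K1_ge0 y_ge0.
rewrite !convRE /= => conv.
have -> : y + e = l * (K + 1) + (1 - l) * y.
  by rewrite /l; field; exact: lt0r_neq0.
apply: (le_trans conv); rewrite addrC; apply: lerD.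
  by rewrite ler_piMl ?powR_ge0 // gerBl.
by rewrite ler_wpM2r ?powR_ge0.
Qed.

End powR_facts.

Section weight_seq.
Context {R : realType} {w : nat -> R}.
Hypothesis w_weight : weight_seq w.

Lemma weight_seq_gt0 k : 0 < w k.
Proof. by case: w_weight => _ [+ _]. Qed.

Lemma weight_seq_noninc : nonincreasing_seq w.
Proof. by apply/nonincreasing_seqP; case: w_weight => _ [_ []]. Qed.

Lemma weight_seq_sum_unbounded C : exists m, C < \sum_(0 <= k < m) w k.
Proof.
have [_ [_ [_ [_ w_sum]]]] := w_weight.
apply/not_existsP => bounded.
have : (\sum_(0 <= i <oo) (w i)%:E <= C%:E)%E.
  apply: lime_le.
    by apply: is_cvg_nneseries => k _ _; rewrite lee_fin ltW ?weight_seq_gt0.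
  apply: nearW => m; rewrite sumEFin lee_fin leNgt; apply/negP.
  exact: bounded.
by rewrite w_sum leNgt ltey.
Qed.

End weight_seq.

Section lorentz_sum.
#[local] Set Implicit Arguments.
#[local] Unset Strict Implicit.
Variables (R : realType) (p : R) (w : nat -> R).
Hypotheses (p_gt0 : 0 < p) (w_ge0 : forall k, 0 <= w k).
Hypothesis w_noninc : nonincreasing_seq w.
Implicit Types (a b : nat -> R) (s : nat -> nat).

Definition lorentz_sum a s : \bar R :=
  (\sum_(0 <= k <oo) ((`|a (s k)| `^ p) * w k)%:E)%E.

Lemma lorentz_term_ge0 a s k : (0 <= ((`|a (s k)| `^ p) * w k)%:E)%E.
Proof. by rewrite lee_fin mulr_ge0 ?powR_ge0. Qed.

Lemma lorentz_sum_ge0 a s : (0 <= lorentz_sum a s)%E.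
Proof. by apply: nneseries_ge0 => k _ _; exact: (@lorentz_term_ge0 a s k). Qed.

Lemma lorentz_sum_le_abs a b s : (forall k, `|b k| <= `|a k|) ->
  (lorentz_sum b s <= lorentz_sum a s)%E.
Proof.
move=> ba; apply: lee_nneseries => [k _ _|k _]; first exact: (@lorentz_term_ge0 b s k).
by rewrite lee_fin ler_wpM2r // nneg_ler_powR // ltW.
Qed.

Lemma lorentz_sum_norm_ge a s : bijective s ->
  (lorentz_sum a s `^ p^-1 <= lorentz_norm p w a)%E.
Proof. by move=> bs; apply: ereal_sup_ubound; exists s. Qed.

Lemma lorentz_sum_le_norm a s x : bijective s ->
  (lorentz_norm p w a <= x%:E)%E -> (lorentz_sum a s <= (x `^ p)%:E)%E.
Proof.
move=> bs ax; apply: poweRV_le => //; first exact: lorentz_sum_ge0.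
exact: le_trans (lorentz_sum_norm_ge a bs) ax.
Qed.

Lemma lorentz_norm_ge0 a : (0 <= lorentz_norm p w a)%E.
Proof.
have id_bij : bijective (@id nat) by exists id.
exact: le_trans (poweR_ge0 _ _) (lorentz_sum_norm_ge a id_bij).
Qed.

Lemma lorentz_norm_fin a M : (lorentz_norm p w a <= M%:E)%E ->
  exists2 x, lorentz_norm p w a = x%:E & 0 <= x.
Proof.
move: (lorentz_norm_ge0 a); case: (lorentz_norm p w a) => [x| |] //.
by rewrite lee_fin => x0 _; exists x.
Qed.

Lemma lorentz_norm_le a (Y : \bar R) :
  (forall s, bijective s -> (lorentz_sum a s `^ p^-1 <= Y)%E) ->
  (lorentz_norm p w a <= Y)%E.
Proof. by move=> le_Y; apply: ge_ereal_sup => _ [s bs <-]; apply: le_Y. Qed.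

Lemma lorentz_norm_le_abs a b : (forall k, `|b k| <= `|a k|) ->
  (lorentz_norm p w b <= lorentz_norm p w a)%E.
Proof.
move=> ba; apply: lorentz_norm_le => s bs.
apply: le_trans (lorentz_sum_norm_ge a bs).
apply: gt0_ler_poweR; first by rewrite invr_ge0 ltW.
- by rewrite in_itv /= lorentz_sum_ge0 leey.
- by rewrite in_itv /= lorentz_sum_ge0 leey.
exact: lorentz_sum_le_abs s ba.
Qed.

Lemma lorentz_norm_le_sum a t : 0 <= t ->
  (forall s, bijective s -> (lorentz_sum a s <= t%:E)%E) ->
  (lorentz_norm p w a <= (t `^ p^-1)%:E)%E.
Proof.
move=> t0 le_t; apply: lorentz_norm_le => s bs; rewrite -poweR_EFin.
apply: gt0_ler_poweR; first by rewrite invr_ge0 ltW.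
- by rewrite in_itv /= lorentz_sum_ge0 leey.
- by rewrite in_itv /= lee_fin t0 leey.
exact: le_t.
Qed.

Definition swapn (r q k : nat) : nat :=
  if k == r then q else if k == q then r else k.

Lemma swapnK r q : involutive (swapn r q).
Proof. by move=> k; rewrite /swapn; do ![case: eqP => //=; try congruence]. Qed.

Lemma lorentz_sum_swap a b s r q : (forall k, `|b k| <= `|a k|) -> b (s q) = 0 ->
  (lorentz_sum b s + ((`|a (s q)| `^ p - `|b (s r)| `^ p) * w r)%:E
     <= lorentz_sum a (s \o swapn r q))%E.
Proof.
move=> ba bsq0; rewrite /lorentz_sum (nneseriesD1 (n := r)) //; last first.
  by move=> k _; exact: (@lorentz_term_ge0 b s k).
rewrite [X in (_ <= X)%E](nneseriesD1 (n := r)) //; last first.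
  by move=> k _; exact: (@lorentz_term_ge0 a (s \o swapn r q) k).
rewrite addeAC -EFinD; apply: leeD.
  by rewrite /= /swapn eqxx -mulrDl addrC subrK.
apply: lee_nneseries => [k _ _|k /andP[_ kr]]; first exact: (@lorentz_term_ge0 b s k).
rewrite lee_fin /= /swapn (negPf kr); case: eqP => [->|_].
  by rewrite bsq0 normr0 powR0 ?gt_eqF // mul0r mulr_ge0 ?powR_ge0.
by rewrite ler_wpM2r // nneg_ler_powR // ltW.
Qed.

Lemma lorentz_small_entry a s M c m : bijective s -> 0 <= c ->
  (lorentz_norm p w a <= M%:E)%E -> M `^ p < c `^ p * \sum_(0 <= k < m) w k ->
  exists2 r, (r < m)%N & `|a (s r)| < c.
Proof.
move=> bs c0 aM; apply: contraPP => no_small; apply/negP; rewrite -leNgt -lee_fin.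
apply: le_trans (lorentz_sum_le_norm bs aM).
apply: le_trans (nneseries_lim_ge m _); last first.
  by move=> k _ _; exact: (@lorentz_term_ge0 a s k).
rewrite sumEFin lee_fin mulr_sumr; apply: ler_sum_nat => k /andP[_ km].
apply: ler_wpM2r => //; apply: nneg_ler_powR => //; first exact: ltW.
by rewrite leNgt; apply/negP => small; apply: no_small; exists k.
Qed.

Lemma lorentz_sum_trunc_gap a i n m c d M s : 0 <= c <= d -> bijective s ->
  (lorentz_norm p w a <= M%:E)%E -> M `^ p < c `^ p * \sum_(0 <= k < m) w k ->
  (i <= n)%N -> d <= `|a n| ->
  exists2 s', bijective s' &
    (lorentz_sum (trunc i a) s + ((d `^ p - c `^ p) * w m)%:E <= lorentz_sum a s')%E.
Proof.
move=> /andP[c0 cd] bs aM Mlt ni dn.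
have trunc_le k : `|trunc i a k| <= `|a k|.
  by rewrite /trunc; case: ifP; rewrite ?normr0.
have trunc_n : trunc i a n = 0 by rewrite /trunc ltnNge ni.
have [r rm small] := lorentz_small_entry bs c0
  (le_trans (lorentz_norm_le_abs trunc_le) aM) Mlt.
have [g _ sg] := bs.
exists (s \o swapn r (g n)); first exact: bij_comp bs (inv_bij (swapnK r (g n))).
apply: le_trans (lorentz_sum_swap r (q := g n) trunc_le _); last by rewrite sg.
rewrite sg; apply: leeD => //; rewrite lee_fin.
apply: ler_pM => //.
- by rewrite subr_ge0 nneg_ler_powR // ltW.
- apply: lerB; apply: nneg_ler_powR => //; try exact: ltW.
  exact: le_trans cd.
- exact: w_noninc (ltnW rm).
Qed.

Lemma lorentz_norm_trunc_gap a i n m c d M x : 0 <= c <= d ->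
  lorentz_norm p w a = x%:E -> x <= M -> M `^ p < c `^ p * \sum_(0 <= k < m) w k ->
  (i <= n)%N -> d <= `|a n| ->
  exists y, [/\ 0 <= y, y <= x, y `^ p + (d `^ p - c `^ p) * w m = x `^ p &
    (lorentz_norm p w (trunc i a) <= y%:E)%E].
Proof.
move=> cd ax xM Mlt ni dn; set delta := (d `^ p - c `^ p) * w m.
have x0 : 0 <= x by rewrite -lee_fin -ax lorentz_norm_ge0.
have a_le_x : (lorentz_norm p w a <= x%:E)%E by rewrite ax.
have aM : (lorentz_norm p w a <= M%:E)%E by rewrite ax lee_fin.
have delta_ge0 : 0 <= delta.
  case/andP: cd => c0 cd; apply: mulr_ge0 => //; rewrite subr_ge0.
  by apply: nneg_ler_powR => //; exact: ltW.
have trunc_sum_le s : bijective s -> (lorentz_sum (trunc i a) s <= (x `^ p - delta)%:E)%E.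
  move=> bs; have [s' bs' gap] := lorentz_sum_trunc_gap cd bs aM Mlt ni dn.
  have := le_trans gap (lorentz_sum_le_norm bs' a_le_x).
  move: (lorentz_sum_ge0 (trunc i a) s); case: lorentz_sum => [t| |] //.
  by rewrite -EFinD !lee_fin => _; rewrite lerBrDr.
have id_bij : bijective (@id nat) by exists id.
have gap_ge0 : 0 <= x `^ p - delta.
  by rewrite -lee_fin (le_trans (lorentz_sum_ge0 (trunc i a) id)) ?trunc_sum_le.
exists ((x `^ p - delta) `^ p^-1); split.
- exact: powR_ge0.
- rewrite -{2}(powRKV p_gt0 x0); apply: nneg_ler_powR => //.
    by rewrite invr_ge0 ltW.
  by rewrite gerBl.
- by rewrite powRVK // subrK.
- exact: lorentz_norm_le_sum.
Qed.

End lorentz_sum.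

Theorem mainTheorem9 (R : realType) (p : R) (w : nat -> R)
  (A : set (nat -> R)) :
  1 <= p -> weight_seq w -> A `<=` L_pw p w ->
  norm_bounded p w A -> equinormed p w A ->
  forall d : R, 0 < d -> exists N : nat, forall a, A a ->
    forall n : nat, (N <= n)%N -> `|a n| < d.
Proof.
move=> p1 w_weight _ [M A_le_M] A_equi d d_gt0.
have p_gt0 : 0 < p by lra.
have w_ge0 k : 0 <= w k by rewrite ltW ?(weight_seq_gt0 w_weight).
have [m Mlt] : exists m, M `^ p < (d / 2) `^ p * \sum_(0 <= k < m) w k.
  have [m] := weight_seq_sum_unbounded w_weight (((d / 2) `^ p)^-1 * M `^ p).
  by exists m; rewrite -ltr_pdivrMl ?powR_gt0 ?divr_gt0.
set delta := (d `^ p - (d / 2) `^ p) * w m.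
have delta_gt0 : 0 < delta.
  rewrite mulr_gt0 ?(weight_seq_gt0 w_weight) // subr_gt0 nneg_ltr_powR //; lra.
set K := (M + 1) `^ p.
have K_ge0 : 0 <= K by apply: powR_ge0.
set eps := delta / (K + delta).
have eps_gt0 : 0 < eps by rewrite divr_gt0 // ltr_wpDl.
have eps_le1 : eps <= 1 by rewrite ler_pdivrMr ?mul1r ?ltr_wpDl // lerDr.
have eps_K : eps * K < delta by rewrite mulrAC ltr_pdivrMr ?ltr_wpDl //; nra.
have [i equi_i] := A_equi eps eps_gt0.
exists i => a Aa n ni; rewrite ltNge; apply/negP => dn.
have [x ax x0] := lorentz_norm_fin (A_le_M a Aa).
have xM : x <= M by rewrite -lee_fin -ax A_le_M.
have d2 : 0 <= d / 2 <= d by apply/andP; split; lra.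
have [y [y0 yx gap trunc_y]] := lorentz_norm_trunc_gap p_gt0 w_ge0
  (weight_seq_noninc w_weight) d2 ax xM Mlt ni dn.
have x_le : x <= y + eps.
  by rewrite -lee_fin EFinD -ax (le_trans (equi_i a Aa)) // leeD2r.
have := powRDr_le p1 y0 (le_trans yx xM) (ltW eps_gt0) eps_le1.
have := nneg_ler_powR (ltW p_gt0) x0 x_le.
move: gap; rewrite -/K -/delta; lra.
Qed.
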